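(* For every positive integer $s$ and every integer $j\ge 1$, $$\sum_{i=0}^{j-1}h_{s,i,j}=(-1)^{j+1}(s-1)\binom{s-1}{j-1},$$ where $h_{s,i,j}$ is defined in the context.
   Context: For a fixed positive integer $s$, the numbers $h_{s,i,j}$ (integers $i\ge 0$, $j$) are defined recursively by: $h_{s,i,j}=0$ if $j\le i$; for $i=0$ and $j\ge 1$, $h_{s,0,j}=\binom{s+j-1}{j}\frac{s-j}{s}$; for $i>0$ and $j>i$, $h_{s,i,j}=-\frac{s-j+1}{i}h_{s,i-1,j-1}-\frac{j-i}{i}h_{s,i-1,j}$. *)

From mathcomp Require Import all_boot all_order all_algebra.
Set Implicit Arguments. Unset Strict Implicit. Unset Printing Implicit Defensive.
Import Order.TTheory GRing.Theory Num.Theory.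
Local Open Scope ring_scope.

(* h s i j for i >= 0, j : nat.  For j <= i, h = 0; negative j (always <= i)
   are thus irrelevant and j ranges over nat.  Values are rationals. *)
Fixpoint h (s : nat) (i j : nat) {struct i} : rat :=
  if (j <= i)%N then 0 else
  match i with
  | 0%N => ('C(s + j - 1, j))%:R * ((s%:R - j%:R) / s%:R)
  | i'.+1 => - ((s%:R - j%:R + 1) / i%:R) * h s i' j.-1
             - ((j%:R - i%:R) / i%:R) * h s i' j
  end.

(* Multiplied by [i+1], the defining recursion of [h] becomes
   [((i+1) h(i+1,j+1) - i h(i,j+1)) + j h(i,j+1) = -(s-j) h(i,j)].
   Summing over [i <= j], the bracket telescopes to [(j+1) h(j+1,j+1) = 0], so
   the row sums [S j := sum_(i<j) h(i,j)] satisfy [j S(j+1) = -(s-j) S j].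
   As [S 1 = s-1] and [j C(n,j) = (n-j+1) C(n,j-1)], the closed form obeys the
   same first-order recurrence, and the formula follows by induction on [j]. *)

From mathcomp Require Import all_boot all_order all_algebra.
From mathcomp Require Import ring zify.
Import Order.TTheory GRing.Theory Num.Theory.
Local Open Scope ring_scope.

Lemma h_eq0 {s i j} : (j <= i)%N -> h s i j = 0.
Proof. by case: i => [|i] /= ->. Qed.

Lemma h_telescoping s i j :
  (i.+1%:R * h s i.+1 j.+1 - i%:R * h s i j.+1) + j%:R * h s i j.+1
  = - (s%:R - j%:R) * h s i j.
Proof.
have [le_j_i | lt_i_j] := leqP j i.
  rewrite (h_eq0 (_ : j.+1 <= i.+1)%N) // mulr0 sub0r (h_eq0 le_j_i) mulr0.
  have [lt_j_i | ->] : (j < i)%N \/ j = i by lia.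
    by rewrite h_eq0 // !mulr0 oppr0 addr0.
  by rewrite addNr.
have iS_neq0 : (i.+1%:R : rat) != 0 by rewrite pnatr_eq0.
rewrite [h s i.+1 j.+1]/= ltnS leqNgt lt_i_j /= -!natr1.
by field; rewrite natr1.
Qed.

Definition row_sum s j := \sum_(0 <= i < j) h s i j.

Lemma row_sum_rec s j : j%:R * row_sum s j.+1 = - (s%:R - j%:R) * row_sum s j.
Proof.
have telescope_0 : \sum_(0 <= i < j.+1)
    (i.+1%:R * h s i.+1 j.+1 - i%:R * h s i j.+1) = 0.
  by rewrite telescope_sumr // h_eq0 // mulr0 mul0r subrr.
have extend_row : row_sum s j = \sum_(0 <= i < j.+1) h s i j.
  by rewrite /row_sum big_nat_recr //= h_eq0 // addr0.
rewrite extend_row /row_sum mulr_sumr -[LHS]add0r -[X in X + _]telescope_0.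
rewrite -big_split /= mulr_sumr; apply: eq_bigr => i _.
exact: h_telescoping.
Qed.

Lemma row_sum1 s : (0 < s)%N -> row_sum s 1 = s%:R - 1.
Proof.
move=> s_gt0; have s_neq0 : (s%:R : rat) != 0 by rewrite pnatr_eq0 -lt0n.
by rewrite /row_sum big_nat1 /= addn1 subn1 bin1 /=; field.
Qed.

Lemma natr_mul_binS (R : pzRingType) n k :
  k.+1%:R * ('C(n, k.+1))%:R = (n%:R - k%:R) * ('C(n, k))%:R :> R.
Proof.
rewrite -natrM mul_bin_left natrM.
have [le_k_n | lt_n_k] := leqP k n; first by rewrite natrB.
by rewrite bin_small // !mulr0.
Qed.

Theorem corollary9 (s j : nat) : (0 < s)%N -> (1 <= j)%N ->
  \sum_(0 <= i < j) h s i j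
  = (-1) ^+ j.+1 * (s%:R - 1) * ('C(s - 1, j - 1))%:R.
Proof.
move=> s_gt0; case: j => [//|k] _; rewrite -/(row_sum s k.+1).
elim: k => [|k IHk].
  by rewrite row_sum1 // subnn bin0 expr2 mulrN1 opprK mul1r mulr1.
have kS_neq0 : (k.+1%:R : rat) != 0 by rewrite pnatr_eq0.
apply: (mulfI kS_neq0); rewrite row_sum_rec IHk !subSS !subn0.
rewrite [RHS]mulrCA natr_mul_binS natrB // -natr1 !exprS.
by ring.
Qed.
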